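(* Consider the network with vertices $s_1,s_2,s_3,t$ and directed edges $(s_3,s_1),(s_3,s_2),(s_1,t),(s_2,t)$, where $\mathcal{A}=\mathcal{Z}=\{0,1\}$, the messages $X_1^k,X_2^k,X_3^k$ have all components i.i.d. uniform on $\{0,1\}$, and the demand function is the arithmetic sum $f(X_1,X_2,X_3)=X_1+X_2+X_3\in\{0,1,2,3\}$ over the integers. Then every admissible rate tuple $(R_{31},R_{32},R_1,R_2)$ satisfies $R_1\ge1$, $R_2\ge1$, and $$\frac{R_1+R_2}{2}\ \ge\ \frac{0.5+3-0.75\log_2 3}{2}\approx\frac{2.31128}{2}.$$
   Context: A source-network code $\mathcal{C}_{f,k}$ consists of encoders $\phi_{(s_3,s_1)},\phi_{(s_3,s_2)}:\mathcal{A}^k\to\mathcal{Z}^*$, $\phi_{(s_1,t)},\phi_{(s_2,t)}:\mathcal{A}^k\times\mathcal{Z}^*\to\mathcal{Z}^*$ ($\mathcal{Z}^*$ = finite binary sequences) and a decoder $\psi_t:\mathcal{Z}^*\times\mathcal{Z}^*\to\{0,1,2,3\}^k$; $\mathbf{Z}_{31}=\phi_{(s_3,s_1)}(X_3^k)$, $\mathbf{Z}_{32}=\phi_{(s_3,s_2)}(X_3^k)$, $\mathbf{Z}_1=\phi_{(s_1,t)}(X_1^k,\mathbf{Z}_{31})$, $\mathbf{Z}_2=\phi_{(s_2,t)}(X_2^k,\mathbf{Z}_{32})$, and $\Pr\{\psi_t(\mathbf{Z}_1,\mathbf{Z}_2)\ne f(X_1^k,X_2^k,X_3^k)\}=0$,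 with $f$ applied componentwise. A tuple $(R_{31},R_{32},R_1,R_2)$ is admissible if for every $\epsilon>0$ there exist a sufficiently large $k$ and such a code with $\log|\mathcal{Z}|\,\mathbb{E}\ell(\mathbf{Z}_e)\le k\log|\mathcal{A}|(R_e+\epsilon)$ for each $e\in\{31,32,1,2\}$, where $\ell$ denotes length in symbols of $\mathcal{Z}$. *)

From mathcomp Require Import all_boot.
From Stdlib Require Import Reals.
Set Implicit Arguments. Unset Strict Implicit. Unset Printing Implicit Defensive.

(* Alphabet A = Z = {0,1} = bool; Z^* = seq bool (finite binary sequences). *)
Definition word (k : nat) := {ffun 'I_k -> bool}.
Definition outword (k : nat) := {ffun 'I_k -> 'I_4}.

Definition fsum (a b c : bool) : 'I_4 := inord (nat_of_bool a + nat_of_bool b + nat_of_bool c).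
Definition fvec k (x1 x2 x3 : word k) : outword k := [ffun i => fsum (x1 i) (x2 i) (x3 i)].

(* A source-network code C_{f,k} on the network s3->s1, s3->s2, s1->t, s2->t. *)
Record code (k : nat) := Code {
  enc31 : word k -> seq bool;
  enc32 : word k -> seq bool;
  enc1  : word k -> seq bool -> seq bool;
  enc2  : word k -> seq bool -> seq bool;
  dec   : seq bool -> seq bool -> outword k }.

(* Message triple (X1^k, X2^k, X3^k), uniformly distributed on its finite type. *)
Definition msg (k : nat) := (word k * word k * word k)%type.

Section CodeDefs.
Variables (k : nat) (C : code k).
Definition Z31 (x : msg k) := enc31 C x.2.
Definition Z32 (x : msg k) := enc32 C x.2.
Definition Z1 (x : msg k) := enc1 C x.1.1 (Z31 x).
Definition Z2 (x : msg k) := enc2 C x.1.2 (Z32 x).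
Definition output (x : msg k) := dec C (Z1 x) (Z2 x).

Definition err_prob : R :=
  INR #|[set x : msg k | output x != fvec x.1.1 x.1.2 x.2]| / INR #|{: msg k}|.

Definition exp_len (Z : msg k -> seq bool) : R :=
  INR (\sum_(x : msg k) size (Z x)) / INR #|{: msg k}|.
End CodeDefs.

(* Admissibility of (R31,R32,R1,R2): for every eps > 0 there are arbitrarily
   large block lengths k with a zero-error code meeting the rate constraints
   log|Z| E l(Z_e) <= k log|A| (R_e + eps), with |A| = |Z| = 2. *)
Definition admissible (R31 R32 R1 R2 : R) : Prop :=
  forall eps : R, (0 < eps)%R -> forall N : nat, exists k : nat, exists C : code k,
    (N <= k)%N /\ err_prob C = 0%R /\
    (ln 2 * exp_len (Z31 C) <= INR k * ln 2 * (R31 + eps))%R /\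
    (ln 2 * exp_len (Z32 C) <= INR k * ln 2 * (R32 + eps))%R /\
    (ln 2 * exp_len (Z1 C) <= INR k * ln 2 * (R1 + eps))%R /\
    (ln 2 * exp_len (Z2 C) <= INR k * ln 2 * (R2 + eps))%R.

Definition log2 (x : R) : R := (ln x / ln 2)%R.

From HB Require Import structures.
From mathcomp Require Import all_boot.
From Stdlib Require Import Reals Lra.

(** Zero error forces [dec (Z1 x) (Z2 x)] to be the componentwise sum.  Give a
    binary word of length [l] the weight [kw = 2^-l / ((l + 1) (l + 2))]; these
    weights sum to [1] over all words, so no prefix condition is needed.  If [w] is a
    positive weight on the [N] messages with mass at most [1] on every fibre of
    [(Z1, Z2)], Gibbs' inequality against [x |-> w x * kw (Z1 x) * kw (Z2 x)] and
    the concavity of [ln] give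
      [ln N + E ln w <= 2 ln (E l1 + 2) + 2 ln (E l2 + 2) + ln 2 (E l1 + E l2)].
    For [R1] take [w = 4^-k]: since [Z2] is a function of [(X2, X3)], the map
    [x |-> (x2, x3)] is injective on the fibres of [Z1].  For the sum rate take
    [w x = prod_i P(X3_i = x3_i | S_i = s_i)]: on a fibre of [(Z1, Z2)] the sum
    [s] is fixed and, mixing messages across the cut, [x |-> x3] is injective,
    while [E ln w = k (ln 2 / 2 - 3/4 ln 3)].  The logarithmic terms are [o(k)],
    so the rate bounds survive the limit [k -> oo]. *)

Set Implicit Arguments.
Unset Strict Implicit.
Unset Printing Implicit Defensive.

Open Scope R_scope.

(** * Sums and logarithms of reals *)

Lemma RplusA : associative Rplus. Proof. by move=> *; ring. Qed.
Lemma RmultA : associative Rmult. Proof. by move=> *; ring. Qed.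
HB.instance Definition _ :=
  Monoid.isComLaw.Build R 0 Rplus RplusA Rplus_comm Rplus_0_l.
HB.instance Definition _ :=
  Monoid.isComLaw.Build R 1 Rmult RmultA Rmult_comm Rmult_1_l.
HB.instance Definition _ := Monoid.isMulLaw.Build R 0 Rmult Rmult_0_l Rmult_0_r.
HB.instance Definition _ :=
  Monoid.isAddLaw.Build R Rmult Rplus Rmult_plus_distr_r Rmult_plus_distr_l.

Notation "\sum_ ( i <- r | P ) F" := (\big[Rplus/0]_(i <- r | P%B) F%R) : R_scope.
Notation "\sum_ ( i <- r ) F" := (\big[Rplus/0]_(i <- r) F%R) : R_scope.
Notation "\sum_ ( m <= i < n ) F" := (\big[Rplus/0]_(m <= i < n) F%R) : R_scope.
Notation "\sum_ ( i | P ) F" := (\big[Rplus/0]_(i | P%B) F%R) : R_scope.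
Notation "\sum_ i F" := (\big[Rplus/0]_i F%R) : R_scope.
Notation "\sum_ ( i : t ) F" := (\big[Rplus/0]_(i : t) F%R) (only parsing) : R_scope.
Notation "\sum_ ( i < n ) F" := (\big[Rplus/0]_(i < n) F%R) : R_scope.
Notation "\prod_ ( i <- r | P ) F" := (\big[Rmult/1]_(i <- r | P%B) F%R) : R_scope.
Notation "\prod_ ( i < n ) F" := (\big[Rmult/1]_(i < n) F%R) : R_scope.

Section BigPartition.
Variables (T : Type) (idx : T) (op : Monoid.com_law idx).

Lemma partition_big_undup (I J : eqType) (r : seq I) (P : pred I) (key : I -> J) F :
  \big[op/idx]_(i <- r | P i) F i =
  \big[op/idx]_(j <- undup (map key r)) \big[op/idx]_(i <- r | P i && (key i == j)) F i.
Proof.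
under [RHS]eq_bigr do rewrite big_mkcond.
rewrite exchange_big /= [LHS]big_mkcond; apply: eq_big_seq => i ri.
case: (P i) => /=; last by rewrite big1.
rewrite -big_mkcond big_const_seq (eq_count (a2 := pred1 (key i))) => [|j].
  by rewrite count_uniq_mem ?undup_uniq // mem_undup map_f //= Monoid.mulm1.
by rewrite /= eq_sym.
Qed.

End BigPartition.

Lemma leR_sum (I : Type) (r : seq I) (P : pred I) (F G : I -> R) :
  (forall i, P i -> F i <= G i) -> \sum_(i <- r | P i) F i <= \sum_(i <- r | P i) G i.
Proof. by move=> FG; apply: (big_ind2 Rle) => *; [lra | lra | exact: FG]. Qed.

Lemma sumR_ge0 (I : Type) (r : seq I) (P : pred I) (F : I -> R) :
  (forall i, P i -> 0 <= F i) -> 0 <= \sum_(i <- r | P i) F i.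
Proof. by move=> F0; apply: (big_ind (Rle 0)) => *; [lra | lra | exact: F0]. Qed.

Lemma sumR_const (I : Type) (r : seq I) (P : pred I) (c : R) :
  \sum_(i <- r | P i) c = INR (count P r) * c.
Proof.
rewrite big_const_seq; elim: (count P r) => [|n IH]; first by rewrite /=; lra.
by rewrite S_INR /= IH; lra.
Qed.

Lemma sumR_card (T : finType) (c : R) : \sum_(x : T) c = INR #|T| * c.
Proof. by rewrite sumR_const cardT enumT; congr (INR _ * _); apply: count_predT. Qed.

Lemma sumR_const_card (T : finType) (P : pred T) (c : R) :
  \sum_(x | P x) c = INR #|P| * c.
Proof. by rewrite sumR_const cardE /enum_mem size_filter. Qed.

Lemma INR_sum (I : Type) (r : seq I) (P : pred I) (F : I -> nat) :
  INR (\sum_(i <- r | P i) F i)%nat = \sum_(i <- r | P i) INR (F i).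
Proof. by apply: big_morph => [m n|]; rewrite ?plus_INR. Qed.

Lemma INR_expn m n : INR (expn m n) = INR m ^ n.
Proof. by elim: n => [|n IH] //; rewrite expnS mult_INR IH. Qed.

Lemma ln_bigprod (I : Type) (r : seq I) (P : pred I) (F : I -> R) :
  (forall i, P i -> 0 < F i) ->
  ln (\prod_(i <- r | P i) F i) = \sum_(i <- r | P i) ln (F i).
Proof.
move=> F0.
suff [] : 0 < \prod_(i <- r | P i) F i /\
          ln (\prod_(i <- r | P i) F i) = \sum_(i <- r | P i) ln (F i) by [].
apply: (big_rec2 (fun p s => 0 < p /\ ln p = s)); first by rewrite ln_1; split; lra.
move=> i p s Pi [p0 <-]; have Fi := F0 i Pi.
by split; [exact: Rmult_lt_0_compat | rewrite ln_mult].
Qed.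

Lemma sumR_uniq_subset_le (I : eqType) (s t : seq I) (F : I -> R) :
  uniq s -> uniq t -> {subset s <= t} -> (forall i, 0 <= F i) ->
  \sum_(i <- s) F i <= \sum_(i <- t) F i.
Proof.
move=> s_uniq t_uniq st F0.
have s_filter : perm_eq s [seq i <- t | i \in s].
  apply: uniq_perm; rewrite ?filter_uniq // => i.
  by rewrite mem_filter andb_idr //; apply: st.
rewrite (perm_big _ s_filter) big_filter big_mkcond; apply: leR_sum => i _.
by case: ifP => _; [lra | exact: F0].
Qed.

Lemma sumR_inj_le (T U : finType) (P : pred T) (phi : T -> U) (G : U -> R) :
  {in P &, injective phi} -> (forall u, 0 <= G u) ->
  \sum_(x | P x) G (phi x) <= \sum_u G u.
Proof.
move=> phi_inj G0; rewrite (eq_bigl (mem P)) // -(big_imset G phi_inj) big_mkcond.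
by apply: leR_sum => u _; case: ifP => _; [lra | exact: G0].
Qed.

Lemma ln_le x y : 0 < x -> x <= y -> ln x <= ln y.
Proof. by move=> x0 [xy | <-]; [apply/Rlt_le/ln_increasing | lra]. Qed.

Lemma ln_le_sub1 y : 0 < y -> ln y <= y - 1.
Proof. by move=> y0; have := exp_ineq1_le (ln y); rewrite exp_ln //; lra. Qed.

Lemma ln_le_tangent y m : 0 < y -> 0 < m -> ln y <= ln m + y / m - 1.
Proof.
move=> y0 m0; have := ln_le_sub1 (Rdiv_lt_0_compat _ _ y0 m0).
by rewrite /Rdiv ln_mult ?ln_Rinv //; [lra | apply: Rinv_0_lt_compat].
Qed.

Lemma sum_ln_le_card_ln_mean (T : finType) (y : T -> R) :
  (0 < #|T|)%nat -> (forall x, 0 < y x) ->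
  \sum_x ln (y x) <= INR #|T| * ln ((\sum_x y x) / INR #|T|).
Proof.
move=> /card_gt0P [x0 _] y0; set N := INR #|T|; set m := (\sum_x y x) / N.
have N0 : 0 < N by apply/lt_0_INR/ltP/card_gt0P; exists x0.
have S0 : 0 < \sum_x y x.
  rewrite (bigD1 x0) //=; have := y0 x0.
  have : 0 <= \sum_(x | x != x0) y x by apply: sumR_ge0 => x _; exact/Rlt_le.
  lra.
have m0 : 0 < m by apply: Rdiv_lt_0_compat.
apply: (Rle_trans _ (\sum_x (ln m + y x / m - 1))).
  by apply: leR_sum => x _; exact: ln_le_tangent.
rewrite /Rminus !big_split /= !sumR_card /Rdiv -big_distrl /= -/(Rdiv _ m) /m.
rewrite -/N; right; field; lra.
Qed.

Lemma ln_affine_sublinear (c M : R) : 0 < c -> 0 <= M ->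
  exists K : nat, forall k : nat, (K <= k)%nat -> ln (INR k * M + 2) < c * INR k.
Proof.
move=> c0 M0.
have [K HK] := INR_archimed (c / 2) (c / 2 + ln (2 / c) - 1 + ln (M + 2)) ltac:(lra).
exists K => k /leP /le_INR kK; have k0 := pos_INR k.
have := ln_le_tangent (y := INR k + 1) (m := 2 / c) ltac:(lra) ltac:(apply: Rdiv_lt_0_compat; lra).
have -> : (INR k + 1) / (2 / c) = c / 2 * (INR k + 1) by field; lra.
have : ln (INR k * M + 2) <= ln (INR k + 1) + ln (M + 2).
  by rewrite -ln_mult; [apply: ln_le; nra | lra | lra].
nra.
Qed.

(** * A Kraft inequality without prefix condition *)

Definition kraft_weight (l : nat) : R := / ((INR l + 1) * (INR l + 2) * 2 ^ l).

Lemma kraft_weight_gt0 l : 0 < kraft_weight l.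
Proof.
have := pos_INR l; have := pow_lt 2 l ltac:(lra) => *.
by apply/Rinv_0_lt_compat/Rmult_lt_0_compat => //; nra.
Qed.

Lemma ln_kraft_weight_ge l :
  - (2 * ln (INR l + 2) + INR l * ln 2) <= ln (kraft_weight l).
Proof.
have l0 := pos_INR l; have := pow_lt 2 l ltac:(lra) => p0.
rewrite /kraft_weight ln_Rinv; last by apply: Rmult_lt_0_compat => //; nra.
rewrite !ln_mult ?ln_pow; try nra.
by have := ln_le (x := INR l + 1) (y := INR l + 2) ltac:(lra) ltac:(lra); lra.
Qed.

Lemma sum_kraft_weight_lengths L :
  \sum_(0 <= l < L) 2 ^ l * kraft_weight l = 1 - / (INR L + 1).
Proof.
elim: L => [|L IH]; first by rewrite big_geq //=; lra.
rewrite big_nat_recr // IH /kraft_weight S_INR /=.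
have := pos_INR L; have := pow_lt 2 L ltac:(lra) => *; field; lra.
Qed.


Lemma count_size_le_expn (s : seq (seq bool)) l :
  uniq s -> (count (fun z => size z == l) s <= expn 2 l)%nat.
Proof.
move=> s_uniq; rewrite -size_filter.
have -> : expn 2 l = size (map val (enum {: l.-tuple bool})).
  by rewrite size_map -cardE card_tuple card_bool.
apply: uniq_leq_size; first by rewrite filter_uniq.
move=> z; rewrite mem_filter => /andP[zl _].
by apply/mapP; exists (Tuple zl); rewrite ?mem_enum.
Qed.

Lemma kraft_sum_le1 (s : seq (seq bool)) :
  uniq s -> \sum_(z <- s) kraft_weight (size z) <= 1.
Proof.
move=> s_uniq; set L := (\max_(z <- s) size z).+1.
rewrite (partition_big_undup _ _ _ size) /=.
apply: (Rle_trans _ (\sum_(l <- undup (map size s)) 2 ^ l * kraft_weight l)).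
  apply: leR_sum => l _.
  rewrite (eq_bigr (fun=> kraft_weight l)) => [|z /eqP ->] //.
  rewrite sumR_const; apply: Rmult_le_compat_r; first exact/Rlt_le/kraft_weight_gt0.
  by rewrite -[2]/(INR 2) -INR_expn; apply/le_INR/leP/count_size_le_expn.
apply: (Rle_trans _ (\sum_(0 <= l < L) 2 ^ l * kraft_weight l)).
  apply: sumR_uniq_subset_le => [||l|l]; rewrite ?undup_uniq ?iota_uniq //.
    by rewrite mem_undup mem_index_iota => /mapP[z zs ->]; rewrite ltnS leq_bigmax_seq.
  by have := pow_lt 2 l ltac:(lra); have := kraft_weight_gt0 l; nra.
by rewrite sum_kraft_weight_lengths; have := pos_INR L; have := Rinv_0_lt_compat (INR L + 1); lra.
Qed.

Lemma sum_kraft_fibre_le1 (I : eqType) (r : seq I) (P : pred I) (key : I -> seq bool) (G : I -> R) :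
  (forall z, \sum_(i <- r | P i && (key i == z)) G i <= 1) ->
  \sum_(i <- r | P i) kraft_weight (size (key i)) * G i <= 1.
Proof.
move=> G1; rewrite (partition_big_undup _ _ _ key).
apply: Rle_trans (kraft_sum_le1 (undup_uniq (map key r))).
apply: leR_sum => z _; rewrite (eq_bigr (fun i => kraft_weight (size z) * G i)).
  rewrite -big_distrr /= -[X in _ <= X]Rmult_1_r; apply: Rmult_le_compat_l => //.
  exact/Rlt_le/kraft_weight_gt0.
by move=> i /andP[_ /eqP ->].
Qed.

(** * The converse bound for two encoders *)

Definition mean_len (T : finType) (Z : T -> seq bool) : R :=
  INR (\sum_(x : T) size (Z x))%nat / INR #|{: T}|.

Section TwoEncoderBound.
Variables (T : finType) (Za Zb : T -> seq bool) (w : T -> R).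
Hypothesis T_nonempty : (0 < #|T|)%nat.
Hypothesis w_gt0 : forall x, 0 < w x.
Hypothesis fibre_mass_le1 :
  forall za zb, \sum_(x | (Za x == za) && (Zb x == zb)) w x <= 1.

Let N := INR #|T|.
Let N_gt0 : 0 < N. Proof. exact/lt_0_INR/ltP. Qed.
Let kw (Z : T -> seq bool) x := kraft_weight (size (Z x)).
Let mass x := w x * kw Za x * kw Zb x.
Let len_cost (Z : T -> seq bool) x := 2 * ln (INR (size (Z x)) + 2) + ln 2 * INR (size (Z x)).

Let kw_gt0 Z x : 0 < kw Z x. Proof. exact: kraft_weight_gt0. Qed.
Let mass_gt0 x : 0 < mass x.
Proof. by do 2 apply: Rmult_lt_0_compat => //. Qed.

Lemma kraft_mass_le1 : \sum_x mass x <= 1.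
Proof.
rewrite (eq_bigr (fun x => kraft_weight (size (Za x)) * (kraft_weight (size (Zb x)) * w x))).
  by apply: sum_kraft_fibre_le1 => za; apply: sum_kraft_fibre_le1 => zb; apply: fibre_mass_le1.
by move=> x _; rewrite /mass /kw; ring.
Qed.

Lemma sum_ln_kraft_mass_le0 : \sum_x ln (N * mass x) <= 0.
Proof.
apply: (Rle_trans _ (\sum_x (N * mass x - 1))).
  by apply: leR_sum => x _; apply/ln_le_sub1/Rmult_lt_0_compat.
rewrite /Rminus big_split /= -big_distrr sumR_card /= -/N.
by have := kraft_mass_le1; nra.
Qed.

Lemma sum_len_cost_le (Z : T -> seq bool) :
  \sum_x len_cost Z x <= N * (2 * ln (mean_len Z + 2) + ln 2 * mean_len Z).
Proof.
have sum_len : \sum_x INR (size (Z x)) = N * mean_len Z.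
  by rewrite /mean_len -INR_sum -/N; field; lra.
rewrite /len_cost big_split /= -!big_distrr /= sum_len.
have len_add2_gt0 x : 0 < INR (size (Z x)) + 2 by have := pos_INR (size (Z x)); lra.
have := sum_ln_le_card_ln_mean T_nonempty len_add2_gt0.
rewrite big_split /= sum_len sumR_card -/N.
have -> : (N * mean_len Z + N * 2) / N = mean_len Z + 2 by field; lra.
nra.
Qed.

Theorem two_encoder_bound :
  ln N + (\sum_x ln (w x)) / N <=
  2 * ln (mean_len Za + 2) + 2 * ln (mean_len Zb + 2) + ln 2 * (mean_len Za + mean_len Zb).
Proof.
have per_x x : ln N + ln (w x) <= ln (N * mass x) + len_cost Za x + len_cost Zb x.
  have := ln_kraft_weight_ge (size (Za x)); have := ln_kraft_weight_ge (size (Zb x)).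
  have w0 := w_gt0 x; have kwa := kw_gt0 Za x; have kwb := kw_gt0 Zb x.
  have wa0 : 0 < w x * kw Za x by apply: Rmult_lt_0_compat.
  rewrite (ln_mult _ _ N_gt0 (mass_gt0 x)) /mass !ln_mult // /len_cost /kw; lra.
have split_rhs : \sum_x (ln (N * mass x) + len_cost Za x + len_cost Zb x) =
    \sum_x ln (N * mass x) + \sum_x len_cost Za x + \sum_x len_cost Zb x.
  by rewrite !big_split.
have := @leR_sum _ (index_enum T) xpredT _ _ (fun x _ => per_x x).
rewrite split_rhs big_split /= sumR_card -/N.
have := sum_ln_kraft_mass_le0; have := sum_len_cost_le Za; have := sum_len_cost_le Zb.
move=> *; apply: (Rmult_le_reg_l N) => //; rewrite Rmult_plus_distr_l.
have -> : N * ((\sum_x ln (w x)) / N) = \sum_x ln (w x) by field; lra.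
lra.
Qed.

End TwoEncoderBound.

Lemma one_encoder_bound (T : finType) (Z : T -> seq bool) (M : nat) :
  (0 < #|T|)%nat -> (forall z, #|[pred x | Z x == z]| <= M)%nat ->
  ln (INR #|T| / INR M) <= 2 * ln (mean_len Z + 2) + 2 * ln 2 + ln 2 * mean_len Z.
Proof.
move=> T_nonempty fibre_le; have N0 : 0 < INR #|T| by exact/lt_0_INR/ltP.
have M0 : 0 < INR M.
  have /card_gt0P [x0 _] := T_nonempty; apply/lt_0_INR/ltP.
  by apply: leq_trans (fibre_le (Z x0)); apply/card_gt0P; exists x0; rewrite inE.
have := two_encoder_bound (Za := Z) (Zb := fun=> [::]) (w := fun=> / INR M) T_nonempty.
have mean_nil : mean_len (fun _ : T => [::]) = 0 by rewrite /mean_len big1 //= /Rdiv Rmult_0_l.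
rewrite mean_nil sumR_card ln_Rinv // /Rdiv ln_mult ?ln_Rinv //; try exact: Rinv_0_lt_compat.
have -> : INR #|T| * - ln (INR M) * / INR #|T| = - ln (INR M) by field; lra.
rewrite Rplus_0_l Rplus_0_r => bound; apply: bound => [x|za zb].
  exact: Rinv_0_lt_compat.
rewrite sumR_const_card -[X in _ <= X](Rinv_r (INR M)); last lra.
apply/Rmult_le_compat_r; first exact/Rlt_le/Rinv_0_lt_compat.
apply/le_INR/leP/(leq_trans _ (fibre_le za))/subset_leq_card.
by apply/subsetP => x /andP[].
Qed.

(** * The network *)

Lemma fsumE a b c : nat_of_ord (fsum a b c) = (nat_of_bool a + nat_of_bool b + nat_of_bool c)%nat.
Proof. by rewrite inordK //; case: a b c => [] [] []. Qed.

Lemma fvec_inj1 k (a a' b c : word k) : fvec a b c = fvec a' b c -> a = a'.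
Proof.
move=> e; apply/ffunP => i; move/ffunP/(_ i)/(congr1 (@nat_of_ord 4)): e.
by rewrite !ffunE !fsumE => /addIn /addIn; case: (a i) (a' i) => [] [].
Qed.

Lemma fvec_inj2 k (a b b' c : word k) : fvec a b c = fvec a b' c -> b = b'.
Proof.
move=> e; apply/ffunP => i; move/ffunP/(_ i)/(congr1 (@nat_of_ord 4)): e.
by rewrite !ffunE !fsumE => /addIn /addnI; case: (b i) (b' i) => [] [].
Qed.

Lemma card_word k : #|{: word k}| = expn 2 k.
Proof. by rewrite card_ffun card_bool card_ord. Qed.

Lemma msg_nonempty k : (0 < #|{: msg k}|)%nat.
Proof. by rewrite !card_prod card_word !muln_gt0 expn_gt0. Qed.

Lemma card_ffun_coord (I U : finType) (i : I) (u : U) :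
  (#|[pred f : {ffun I -> U} | f i == u]| * #|U|)%nat = #|{: {ffun I -> U}}|.
Proof.
pose F j : pred U := if j == i then xpred1 u else xpredT.
have -> : #|[pred f : {ffun I -> U} | f i == u]| =
          #|(family_mem (fun j => mem (F j)) : simpl_pred {ffun I -> U})|.
  apply: eq_card => f; rewrite [LHS]inE.
  apply/eqP/familyP => [fi j | /(_ i)]; last by rewrite /F eqxx => /eqP.
  by rewrite /F; case: eqP => [->|] //; rewrite unfold_in fi /=.
rewrite card_family card_ffun foldrE big_map big_enum /= (bigD1 i) //= {1}/F eqxx.
rewrite (eq_bigr (fun=> #|U|)) => [|j /negPf ji]; last by rewrite /F ji; apply: eq_card.
by rewrite card1 mul1n prod_nat_const cardC1 -expnSr prednK //; apply/card_gt0P; exists i.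
Qed.

Lemma sum_ffun_coord (I U : finType) (i : I) (G : U -> R) :
  INR #|U| * \sum_(f : {ffun I -> U}) G (f i) = INR #|{: {ffun I -> U}}| * \sum_u G u.
Proof.
rewrite (partition_big (fun f : {ffun I -> U} => f i) xpredT) //= !big_distrr /=.
apply: eq_bigr => u _; rewrite (eq_bigr (fun=> G u)) => [|f /eqP ->] //.
by rewrite sumR_const_card -(card_ffun_coord i u) mult_INR -Rmult_assoc (Rmult_comm (INR #|U|)).
Qed.

(* [P (X3 = c | X1 + X2 + X3 = s)] for independent uniform bits. *)
Definition x3_given_sum (s : 'I_4) (c : bool) : R := if c then INR s / 3 else 1 - INR s / 3.

Definition x3_weight k (x : msg k) : R :=
  \prod_(i < k) x3_given_sum (fvec x.1.1 x.1.2 x.2 i) (x.2 i).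

Lemma x3_given_sum_ge0 s c : 0 <= x3_given_sum s c.
Proof.
have : INR s <= INR 3 by apply/le_INR/leP; rewrite -ltnS.
by have := pos_INR s; case: c => /=; lra.
Qed.

Lemma x3_given_sum_gt0 a b c : 0 < x3_given_sum (fsum a b c) c.
Proof. by rewrite /x3_given_sum fsumE; case: a b c => [] [] [] /=; lra. Qed.

Lemma x3_given_sum_total s : x3_given_sum s true + x3_given_sum s false = 1.
Proof. by rewrite /x3_given_sum; lra. Qed.

Lemma sum_ln_x3_given_sum :
  \sum_(a : bool) \sum_(b : bool) \sum_(c : bool) ln (x3_given_sum (fsum a b c) c) =
  4 * ln 2 - 6 * ln 3.
Proof.
rewrite !big_bool /x3_given_sum !fsumE /=.
have -> : (1 + 1 + 1) / 3 = 1 by field.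
have -> : 1 - (1 + 1) / 3 = / 3 by field.
have -> : 1 - 1 / 3 = 2 / 3 by field.
have -> : (1 + 1) / 3 = 2 / 3 by field.
have -> : 1 - 0 / 3 = 1 by field.
have -> : 1 / 3 = / 3 by field.
have third_gt0 : 0 < / 3 by apply: Rinv_0_lt_compat; lra.
by rewrite ln_1 /Rdiv ln_mult ?ln_Rinv //; lra.
Qed.

Lemma x3_weight_gt0 k (x : msg k) : 0 < x3_weight x.
Proof.
apply: (big_ind (Rlt 0)) => [| * | i _]; [lra | exact: Rmult_lt_0_compat |].
by rewrite ffunE; apply: x3_given_sum_gt0.
Qed.

Lemma sum_msg_coord k (i : 'I_k) (g : bool -> bool -> bool -> R) :
  \sum_(x : msg k) g (x.1.1 i) (x.1.2 i) (x.2 i) =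
  (INR #|{: word k}| / 2) ^ 3 * \sum_(a : bool) \sum_(b : bool) \sum_(c : bool) g a b c.
Proof.
have coord (G : bool -> R) : \sum_(f : word k) G (f i) = INR #|{: word k}| / 2 * \sum_b G b.
  have := sum_ffun_coord i G; rewrite card_bool /= => e.
  by apply: (Rmult_eq_reg_l (1 + 1)); [rewrite e /word; field | lra].
transitivity (\sum_(a : word k) \sum_(b : word k) \sum_(c : word k) g (a i) (b i) (c i)).
  by rewrite !pair_big; apply: eq_bigl.
rewrite (coord (fun a => \sum_(b : word k) \sum_(c : word k) g a (b i) (c i))).
under eq_bigr => a _ do rewrite (coord (fun b => \sum_(c : word k) g a b (c i))).
under eq_bigr => a _ do under eq_bigr => b _ do rewrite (coord (g a b)).
under eq_bigr => a _ do rewrite -big_distrr.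
by rewrite -!big_distrr /=; ring.
Qed.

Lemma card_wordR k : INR #|{: word k}| = 2 ^ k.
Proof. by rewrite card_word INR_expn; congr (_ ^ _); rewrite /=; lra. Qed.

Lemma card_msgR k : INR #|{: msg k}| = (2 ^ k) ^ 3.
Proof. by rewrite !card_prod !mult_INR card_wordR /=; ring. Qed.

Lemma mean_ln_x3_weight k :
  (\sum_(x : msg k) ln (x3_weight x)) / INR #|{: msg k}| = INR k * (4 * ln 2 - 6 * ln 3) / 8.
Proof.
pose g a b c := ln (x3_given_sum (fsum a b c) c).
rewrite (eq_bigr (fun x : msg k => \sum_(i < k) g (x.1.1 i) (x.1.2 i) (x.2 i))); last first.
  move=> x _; rewrite ln_bigprod => [|i _]; last by rewrite ffunE; apply: x3_given_sum_gt0.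
  by apply: eq_bigr => i _; rewrite ffunE.
rewrite exchange_big /= (eq_bigr (fun=> (2 ^ k / 2) ^ 3 * (4 * ln 2 - 6 * ln 3))) => [|i _].
  by rewrite sumR_card card_ord card_msgR; field; apply: pow_nonzero; lra.
by rewrite sum_msg_coord sum_ln_x3_given_sum card_wordR.
Qed.

Lemma code_bound_cut k (Z : msg k -> seq bool) (side : msg k -> word k) :
  (forall x y, Z x = Z y -> side x = side y -> x.2 = y.2 -> x = y) ->
  INR k * ln 2 <= 2 * ln (exp_len Z + 2) + 2 * ln 2 + ln 2 * exp_len Z.
Proof.
move=> cut_inj.
have := one_encoder_bound (M := #|{: word k * word k}|) (msg_nonempty k).
rewrite card_msgR card_prod mult_INR card_wordR.
have -> : (2 ^ k) ^ 3 / (2 ^ k * 2 ^ k) = 2 ^ k by field; apply: pow_nonzero; lra.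
rewrite ln_pow; last lra.
apply=> z; rewrite -card_prod; apply: (leq_card_in (fun x : msg k => (side x, x.2))) => x y.
by rewrite !inE => /eqP ex /eqP ey [es e3]; apply: cut_inj => //; rewrite ex ey.
Qed.

Section ZeroErrorCode.
Variables (k : nat) (C : code k).
Hypothesis C_zero_error : err_prob C = 0.

Lemma output_correct x : output C x = fvec x.1.1 x.1.2 x.2.
Proof.
have N0 : 0 < INR #|{: msg k}| by exact/lt_0_INR/ltP/msg_nonempty.
move: C_zero_error; rewrite /err_prob; set S := [set _ | _].
case/Rmult_integral => [/(INR_eq _ 0) /eqP | inv0]; last first.
  by have := Rinv_0_lt_compat _ N0; lra.
rewrite cards_eq0 => /eqP S0.
have : x \notin S by rewrite S0 inE.
by rewrite inE negbK => /eqP.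
Qed.

Lemma Z1_cut_inj (x y : msg k) : Z1 C x = Z1 C y -> x.1.2 = y.1.2 -> x.2 = y.2 -> x = y.
Proof.
case: x y => [[a b] c] [[a' b'] c'] /= e1 eb ec; subst b' c'.
have : output C (a, b, c) = output C (a', b, c) by rewrite /output e1.
by rewrite !output_correct /= => /fvec_inj1 ->.
Qed.

Lemma Z2_cut_inj (x y : msg k) : Z2 C x = Z2 C y -> x.1.1 = y.1.1 -> x.2 = y.2 -> x = y.
Proof.
case: x y => [[a b] c] [[a' b'] c'] /= e2 ea ec; subst a' c'.
have : output C (a, b, c) = output C (a, b', c) by rewrite /output e2.
by rewrite !output_correct /= => /fvec_inj2 ->.
Qed.

Lemma Z12_X3_inj (x y : msg k) :
  Z1 C x = Z1 C y -> Z2 C x = Z2 C y -> x.2 = y.2 -> x = y.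
Proof.
case: x y => [[a b] c] [[a' b'] c'] /= e1 e2 ec; subst c'.
have [<-] := Z1_cut_inj (x := (a, b, c)) (y := (a', b, c)) e1 erefl erefl.
by have [<-] := Z2_cut_inj (x := (a, b, c)) (y := (a, b', c)) e2 erefl erefl.
Qed.

Lemma x3_weight_fibre_le1 z1 z2 :
  \sum_(x | (Z1 C x == z1) && (Z2 C x == z2)) x3_weight x <= 1.
Proof.
pose s := dec C z1 z2.
rewrite (eq_bigr (fun x : msg k => \prod_(i < k) x3_given_sum (s i) (x.2 i))); last first.
  by move=> x /andP[/eqP e1 /eqP e2]; rewrite /x3_weight -output_correct /output e1 e2.
apply: (Rle_trans _ (\sum_(c : word k) \prod_(i < k) x3_given_sum (s i) (c i))).
  apply: (sumR_inj_le (phi := fun x : msg k => x.2)) => [x y | c].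
    move=> /andP[/eqP x1 /eqP x2] /andP[/eqP y1 /eqP y2].
    by apply: Z12_X3_inj; rewrite ?x1 ?x2 ?y1 ?y2.
  apply: (big_ind (Rle 0)) => [|*|*]; first lra.
    exact: Rmult_le_pos.
  exact: x3_given_sum_ge0.
rewrite -(bigA_distr_bigA (fun i b => x3_given_sum (s i) b)) /=.
by right; apply: big1 => i _; rewrite big_bool /= x3_given_sum_total.
Qed.

Lemma code_bound_sum :
  INR k * (7 / 2 * ln 2 - 3 / 4 * ln 3) <=
  2 * ln (exp_len (Z1 C) + 2) + 2 * ln (exp_len (Z2 C) + 2) +
  ln 2 * (exp_len (Z1 C) + exp_len (Z2 C)).
Proof.
have := two_encoder_bound (msg_nonempty k) (@x3_weight_gt0 k) x3_weight_fibre_le1.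
have pow_gt0 : 0 < 2 ^ k by apply: pow_lt; lra.
rewrite mean_ln_x3_weight card_msgR !ln_pow //; last lra.
by move=> h; apply: Rle_trans h; right; rewrite /=; field.
Qed.

End ZeroErrorCode.

Lemma exp_len_ge0 k (Z : msg k -> seq bool) : 0 <= exp_len Z.
Proof.
apply: Rmult_le_pos; first exact: pos_INR.
exact/Rlt_le/Rinv_0_lt_compat/lt_0_INR/ltP/msg_nonempty.
Qed.

(** * Rates *)

Definition zero_error_codes (R1 R2 : R) : Prop :=
  forall eps, 0 < eps -> forall K : nat, exists k (C : code k),
    (K <= k)%nat /\ err_prob C = 0 /\
    exp_len (Z1 C) <= INR k * (R1 + eps) /\ exp_len (Z2 C) <= INR k * (R2 + eps).

Lemma admissible_zero_error_codes R31 R32 R1 R2 :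
  admissible R31 R32 R1 R2 -> zero_error_codes R1 R2.
Proof.
move=> adm eps eps_gt0 K; have [k [C [Kk [C0 [_ [_ [E1 E2]]]]]]] := adm eps eps_gt0 K.
have ln2_gt0 : 0 < ln 2 by have := ln_lt_2; lra.
by exists k, C; do !split => //; apply: (Rmult_le_reg_l (ln 2)) => //; lra.
Qed.

Section Rates.
Variables R1 R2 : R.
Hypothesis codes : zero_error_codes R1 R2.

Lemma rate_bound (a c1 c2 : R) : 0 <= c1 -> 0 <= c2 ->
  (forall k (C : code k), err_prob C = 0 ->
     INR k * a <= 2 * ln (exp_len (Z1 C) + 2) + 2 * ln (exp_len (Z2 C) + 2) +
                  ln 2 * (c1 * exp_len (Z1 C) + c2 * exp_len (Z2 C))) ->
  a <= ln 2 * (c1 * R1 + c2 * R2).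
Proof.
move=> c1_ge0 c2_ge0 code_bound; apply: Rnot_lt_le => gap.
have ln2_gt0 : 0 < ln 2 by have := ln_lt_2; lra.
set d := a - ln 2 * (c1 * R1 + c2 * R2).
have d_gt0 : 0 < d by rewrite /d; lra.
set eps := d / (4 * ln 2 * (c1 + c2 + 1)).
have eps_gt0 : 0 < eps by apply: Rdiv_lt_0_compat; nra.
have eps_small : ln 2 * (c1 + c2) * eps <= d / 4.
  have -> : d / 4 = ln 2 * (c1 + c2 + 1) * eps by rewrite /eps; field; nra.
  by nra.
set M := Rabs (R1 + eps) + Rabs (R2 + eps).
have [M1 M2] : Rabs (R1 + eps) <= M /\ Rabs (R2 + eps) <= M.
  by rewrite /M; have := Rabs_pos (R1 + eps); have := Rabs_pos (R2 + eps); split; lra.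
have [K HK] := ln_affine_sublinear (c := d / 8) ltac:(lra) (Rle_trans _ _ _ (Rabs_pos _) M1).
have [k [C [Kk [C0 [E1 E2]]]]] := codes eps_gt0 K.
have k_ge0 := pos_INR k.
have ln_len_le (Z : msg k -> seq bool) r : exp_len Z <= INR k * r -> Rabs r <= M ->
    ln (exp_len Z + 2) <= ln (INR k * M + 2).
  move=> Er rM; apply: ln_le; first by have := exp_len_ge0 Z; lra.
  have : INR k * r <= INR k * M.
    by apply: Rmult_le_compat_l => //; have := Rle_abs r; lra.
  lra.
have len_term : ln 2 * (c1 * exp_len (Z1 C) + c2 * exp_len (Z2 C)) <=
    INR k * (ln 2 * (c1 * R1 + c2 * R2)) + INR k * (ln 2 * (c1 + c2) * eps).
  have := Rmult_le_compat_l (ln 2 * c1) _ _ ltac:(nra) E1.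
  have := Rmult_le_compat_l (ln 2 * c2) _ _ ltac:(nra) E2.
  lra.
have := code_bound k C C0; have := HK k Kk.
have := ln_len_le _ _ E1 M1; have := ln_len_le _ _ E2 M2.
have : INR k * (ln 2 * (c1 + c2) * eps) <= INR k * (d / 4) by apply: Rmult_le_compat_l.
have := Rmult_le_pos _ _ k_ge0 (Rlt_le _ _ d_gt0).
rewrite /d; lra.
Qed.

End Rates.

Theorem mainTheorem5 (R31 R32 R1 R2 : R) :
  admissible R31 R32 R1 R2 ->
  (1 <= R1)%R /\ (1 <= R2)%R /\
  ((1/2 + 3 - 3/4 * log2 3) / 2 <= (R1 + R2) / 2)%R.
Proof.
move=> /admissible_zero_error_codes codes.
have ln2_gt0 : 0 < ln 2 by have := ln_lt_2; lra.
have ln2_le k (Z : msg k -> seq bool) : ln 2 <= ln (exp_len Z + 2).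
  by apply: ln_le; have := exp_len_ge0 Z; lra.
have R1_ge1 : ln 2 <= ln 2 * (1 * R1 + 0 * R2).
  apply: (rate_bound codes); [lra | lra | move=> k C C0].
  by have := ln2_le k (Z2 C); have := code_bound_cut (Z1_cut_inj C0); lra.
have R2_ge1 : ln 2 <= ln 2 * (0 * R1 + 1 * R2).
  apply: (rate_bound codes); [lra | lra | move=> k C C0].
  by have := ln2_le k (Z1 C); have := code_bound_cut (Z2_cut_inj C0); lra.
have sum_ge : 7 / 2 * ln 2 - 3 / 4 * ln 3 <= ln 2 * (1 * R1 + 1 * R2).
  apply: (rate_bound codes); [lra | lra | move=> k C C0].
  by have := code_bound_sum C0; lra.
split; [nra | split; first nra].
rewrite /log2; apply: (Rmult_le_reg_l (2 * ln 2)); first lra.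
have -> : 2 * ln 2 * ((1 / 2 + 3 - 3 / 4 * (ln 3 / ln 2)) / 2) = 7 / 2 * ln 2 - 3 / 4 * ln 3.
  by field; lra.
lra.
Qed.
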